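(* Let $k\ge3$ and $0\le n<k-2$ be integers, let $\chi_1,\chi_2$ be primitive non-trivial Dirichlet characters with conductors $q_1,q_2$, and let $\gamma=\begin{pmatrix}a&b\\c&d\end{pmatrix}\in\Gamma_0(q_1q_2)$ with $c>0$. Then for all $u>0$, $$\Big|\sum_{A\ge1}\frac{\chi_1(A)}{A^{n+1}}\sum_{B\ge1}\overline{\chi_2}(B)B^{k-n-2}e^{2\pi AB(ia/c-u)}\Big|\ll_{k,n,c,q_2}\frac{1}{\sqrt u}.$$ *)

From Stdlib Require Import Reals ZArith Znumtheory.
From Coquelicot Require Import Coquelicot.
Open Scope R_scope.

Definition Cexp (z : C) : C :=
  (exp (Re z) * cos (Im z), exp (Re z) * sin (Im z)).

Definition dirichlet_char (q : Z) (chi : Z -> C) : Prop :=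
  (0 < q)%Z /\
  chi 1%Z = RtoC 1 /\
  (forall m n : Z, chi (m * n)%Z = Cmult (chi m) (chi n)) /\
  (forall n : Z, chi (n + q)%Z = chi n) /\
  (forall n : Z, chi n = RtoC 0 <-> Z.gcd n q <> 1%Z).

Definition induced_modulus (q : Z) (chi : Z -> C) (d : Z) : Prop :=
  forall n : Z, Z.gcd n q = 1%Z -> Z.modulo (n - 1) d = 0%Z -> chi n = RtoC 1.

Definition primitive_char (q : Z) (chi : Z -> C) : Prop :=
  dirichlet_char q chi /\
  (forall d : Z, (0 < d)%Z -> (d | q)%Z -> induced_modulus q chi d -> d = q).

Definition nontrivial_char (chi : Z -> C) : Prop :=
  exists n : Z, chi n <> RtoC 0 /\ chi n <> RtoC 1.

Definition in_Gamma0 (N a b c d : Z) : Prop :=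
  (a * d - b * c)%Z = 1%Z /\ (N | c)%Z.

Definition term (k n : nat) (chi1 chi2 : Z -> C) (a c : Z) (u : R) (A B : nat) : C :=
  Cmult (Cdiv (chi1 (Z.of_nat A)) (RtoC (INR A ^ (n + 1))))
   (Cmult (Cmult (Cconj (chi2 (Z.of_nat B))) (RtoC (INR B ^ (k - n - 2))))
     (Cexp (Cmult (RtoC (2 * PI * INR A * INR B))
                  ((- u)%R, (IZR a / IZR c)%R)))).

From Stdlib Require Import Reals ZArith Lia Lra.
From Coquelicot Require Import Coquelicot.
Open Scope R_scope.

(* For fixed [A] put [x = e^(-2 pi A u)] and [th = 2 pi A a / c]; the inner sum is
   [chi1(A) A^(-n-1) sum_B g(B) B^m x^B] with [m = k - n - 2] and
   [g(B) = conj(chi2(B)) e^(i B th)].  The function [g] is [c]-periodic and, unless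
   [chi1(A) = 0], its sums over a period vanish: shifting the window by [q2] rotates
   the sum by [e^(i q2 th) <> 1], since [q1] does not divide [A] while [(a, q1) = 1].
   For a bounded [c]-periodic mean-zero [f], [m + 1] summations by parts turn the
   trivial bound [x / (1 - x)^(m+1)] for [sum_B f(B) B^m x^B] into [O(x)] uniformly
   on [0 <= x < 1].  As [x <= (A u)^(-1/2)], the [A]-th term is [O(A^(-3/2) u^(-1/2))]. *)

Fixpoint psum (g : nat -> R) (n : nat) : R :=
  match n with O => 0 | S n' => psum g n' + g n' end.

Lemma psum_ext g h n : (forall i, (i < n)%nat -> g i = h i) -> psum g n = psum h n.
Proof. induction n; simpl; intros H; auto. rewrite IHn, H; auto. Qed.

Lemma psum_plus g h n : psum (fun i => g i + h i) n = psum g n + psum h n.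
Proof. induction n; simpl; [|rewrite IHn]; lra. Qed.

Lemma psum_scal k g n : psum (fun i => k * g i) n = k * psum g n.
Proof. induction n; simpl; [|rewrite IHn]; lra. Qed.

Lemma psum_const k n : psum (fun _ => k) n = INR n * k.
Proof. induction n; simpl psum; [simpl; lra|]. rewrite IHn, S_INR; lra. Qed.

Lemma psum_shift g n : psum g (S n) = g O + psum (fun i => g (S i)) n.
Proof. induction n; simpl in *; [|rewrite IHn]; lra. Qed.

Lemma psum_add g a b : psum g (a + b) = psum g a + psum (fun i => g (a + i)%nat) b.
Proof.
  induction b; simpl; [rewrite Nat.add_0_r; lra|].
  rewrite Nat.add_succ_r; simpl. rewrite IHb; lra.
Qed.

Lemma psum_abs g n : Rabs (psum g n) <= psum (fun i => Rabs (g i)) n.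
Proof.
  induction n; simpl; [rewrite Rabs_R0; lra|].
  eapply Rle_trans; [apply Rabs_triang|lra].
Qed.

Lemma psum_le g h n : (forall i, (i < n)%nat -> g i <= h i) -> psum g n <= psum h n.
Proof. induction n; simpl; intros H; [lra|]. apply Rplus_le_compat; auto. Qed.

Lemma psum_ge0 g n : (forall i, 0 <= g i) -> 0 <= psum g n.
Proof. intros H; induction n; simpl; [lra|]. specialize (H n); lra. Qed.

Lemma psum_ge_term g n i : (forall j, 0 <= g j) -> (i < n)%nat -> g i <= psum g n.
Proof.
  intros H0 Hi; induction n; [lia|]. simpl.
  assert (0 <= psum g n) by (apply psum_ge0; auto).
  destruct (Nat.eq_dec i n) as [->|Hne]; [lra|].
  specialize (H0 n). assert (g i <= psum g n) by (apply IHn; lia). lra.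
Qed.

Lemma psum_sum_f_R0 g n : psum g (S n) = sum_f_R0 g n.
Proof. induction n; simpl in *; [lra|]. rewrite <- IHn; simpl; lra. Qed.

Lemma is_series_psum (g : nat -> nat -> R) (s : nat -> R) L :
  (forall l, (l < L)%nat -> is_series (g l) (s l)) ->
  is_series (fun j => psum (fun l => g l j) L) (psum s L).
Proof.
  induction L; intros H; simpl.
  - apply (filterlim_ext (fun _ => 0)); [|apply filterlim_const].
    intros N; induction N; [rewrite sum_O|rewrite sum_Sn, <- IHN]; cbn; ring.
  - exact (is_series_plus _ _ _ _ (IHL (fun l Hl => H l ltac:(lia))) (H L ltac:(lia))).
Qed.

Definition periodic_mean_zero (c : nat) (f : nat -> R) : Prop :=
  (forall B, f (B + c)%nat = f B) /\ psum f c = 0.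

Lemma periodic_mod c (h : nat -> R) : (forall B, h (B + c)%nat = h B) ->
  forall B, h B = h (B mod c)%nat.
Proof.
  intros Hp B.
  assert (Hq : forall q r, h (r + q * c)%nat = h r).
  { induction q; intros r; [f_equal; lia|].
    replace (r + S q * c)%nat with (r + q * c + c)%nat by lia. rewrite Hp; auto. }
  rewrite (Nat.div_mod_eq B c) at 1. rewrite <- (Hq (B / c)%nat (B mod c)%nat). f_equal; lia.
Qed.

Lemma psum_window c (h : nat -> R) : (forall B, h (B + c)%nat = h B) ->
  forall a, psum (fun s => h (a + s)%nat) c = psum h c.
Proof.
  intros Hp a; induction a; [apply psum_ext; auto|].
  rewrite <- IHa.
  assert (E := psum_shift (fun s => h (a + s)%nat) c). simpl psum in E.
  rewrite Hp, Nat.add_0_r in E.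
  assert (psum (fun s => h (S a + s)%nat) c = psum (fun i => h (a + S i)%nat) c)
    by (apply psum_ext; intros; f_equal; lia).
  lra.
Qed.

Lemma bound_nonneg (f : nat -> R) M : (forall B, Rabs (f B) <= M) -> 0 <= M.
Proof. intros H; specialize (H O); pose proof (Rabs_pos (f O)); lra. Qed.

(* The partial sums are periodic because the period sums vanish. *)
Lemma periodic_mean_zero_antiderivative c f M : (0 < c)%nat ->
  periodic_mean_zero c f -> (forall B, Rabs (f B) <= M) ->
  exists F, periodic_mean_zero c F /\ (forall B, Rabs (F B) <= 2 * INR c * M) /\
    (forall B, f (S B) = F (S B) - F B).
Proof.
  intros Hc [Hp H0] HM.
  assert (M0 := bound_nonneg f M HM).
  assert (c0 : 0 < INR c) by (apply lt_0_INR; lia).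
  set (G := psum (fun s => f (S s))).
  assert (GP : forall B, G (B + c)%nat = G B).
  { intros B. unfold G. rewrite psum_add.
    assert (E := psum_window c f Hp (S B)). simpl in E. rewrite E, H0. ring. }
  assert (GB : forall B, Rabs (G B) <= INR c * M).
  { intros B. rewrite (periodic_mod c G GP B).
    assert (Hr : (B mod c < c)%nat) by (apply Nat.mod_upper_bound; lia).
    eapply Rle_trans; [apply psum_abs|].
    eapply Rle_trans; [apply (psum_le _ (fun _ => M)); intros; apply HM|].
    rewrite psum_const. apply Rmult_le_compat_r; auto. apply le_INR; lia. }
  set (mu := psum G c / INR c).
  assert (Hmu : Rabs mu <= INR c * M).
  { unfold mu. rewrite Rabs_div, (Rabs_right (INR c)) by lra.
    apply Rle_div_l; [lra|].
    eapply Rle_trans; [apply psum_abs|].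
    eapply Rle_trans; [apply (psum_le _ (fun _ => INR c * M)); intros; apply GB|].
    rewrite psum_const. lra. }
  exists (fun B => G B - mu). split; [split|split].
  - intros B; rewrite GP; auto.
  - transitivity (psum G c + psum (fun _ => - mu) c).
    + rewrite <- psum_plus. apply psum_ext; intros; ring.
    + rewrite psum_const. unfold mu. field. lra.
  - intros B. unfold Rminus. eapply Rle_trans; [apply Rabs_triang|].
    rewrite Rabs_Ropp. specialize (GB B). lra.
  - intros B. unfold G. simpl. ring.
Qed.

Definition weight (m : nat) (x : R) (j : nat) : R := INR (S j) ^ m * x ^ S j.

Definition wsum (f : nat -> R) (m : nat) (x : R) : R :=
  Series (fun j => f (S j) * weight m x j).

Lemma weight_ge0 m x j : 0 <= x -> 0 <= weight m x j.
Proof. intros; unfold weight; apply Rmult_le_pos; apply pow_le; auto; apply pos_INR. Qed.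

Lemma series_bounded_partial_sums (a : nat -> R) L :
  (forall n, 0 <= a n) -> (forall N, sum_n a N <= L) -> ex_series a /\ Series a <= L.
Proof.
  intros H0 HL.
  assert (Hex : ex_series a).
  { destruct (ex_finite_lim_seq_incr (sum_n a) L) as [l Hl]; auto.
    - intros N. rewrite sum_Sn. specialize (H0 (S N)). unfold plus; simpl; lra.
    - exists l. exact Hl. }
  split; auto.
  apply (is_lim_seq_le (sum_n a) (fun _ => L) (Series a) L); auto.
  - exact (Series_correct _ Hex).
  - apply is_lim_seq_const.
Qed.

Lemma pow_succ_sub_le y m : 0 <= y -> (y + 1) ^ S m - y ^ S m <= INR (S m) * (y + 1) ^ m.
Proof.
  intros Hy; induction m; [simpl; lra|].
  assert (y ^ S m <= (y + 1) ^ S m) by (apply pow_incr; lra).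
  rewrite S_INR.
  replace ((y + 1) ^ S (S m) - y ^ S (S m)) with ((y + 1) * ((y + 1) ^ S m - y ^ S m) + y ^ S m)
    by (simpl; ring).
  replace ((INR (S m) + 1) * (y + 1) ^ S m)
    with ((y + 1) * (INR (S m) * (y + 1) ^ m) + (y + 1) ^ S m) by (simpl; ring).
  apply Rplus_le_compat; auto. apply Rmult_le_compat_l; lra.
Qed.

(* Partial summation: [(1 - x) * sum_n (weight (S m) x)] is [sum_n] of
   [((j+1)^(m+1) - j^(m+1)) x^(j+1)] minus a nonnegative boundary term. *)
Lemma weight_sum_step m x N : 0 <= x ->
  (1 - x) * sum_n (weight (S m) x) N + INR (S N) ^ S m * x ^ S (S N) <=
  INR (S m) * sum_n (weight m x) N.
Proof.
  intros Hx. induction N.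
  - rewrite !sum_O. unfold weight. rewrite S_INR, Rplus_0_l, !pow1.
    assert (1 <= INR (S m)) by (apply (le_INR 1); lia). rewrite !Rmult_1_l, !pow_1. nra.
  - rewrite !sum_Sn. change plus with Rplus.
    assert (Hd := pow_succ_sub_le (INR (S N)) m (pos_INR _)).
    rewrite <- S_INR in Hd.
    assert (0 <= x ^ S (S N)) by (apply pow_le; lra).
    assert (Hdx := Rmult_le_compat_r _ _ _ H Hd).
    unfold weight in *. change (x ^ S (S (S N))) with (x * x ^ S (S N)). nra.
Qed.

Lemma weight_sum_le m x N : 0 <= x < 1 ->
  sum_n (weight m x) N <= INR (fact m) * x / (1 - x) ^ S m.
Proof.
  intros Hx. assert (H1x : 0 < 1 - x) by lra.
  induction m.
  - assert (E : (1 - x) * sum_n (weight 0 x) N + x ^ S (S N) = x).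
    { induction N; [rewrite sum_O; unfold weight; simpl; ring|].
      rewrite sum_Sn. unfold plus, weight in *; simpl in *. nra. }
    assert (0 <= x ^ S (S N)) by (apply pow_le; lra).
    apply (Rmult_le_reg_l (1 - x)); auto. simpl. field_simplify; lra.
  - assert (H := weight_sum_step m x N (proj1 Hx)).
    assert (0 <= INR (S N) ^ S m * x ^ S (S N))
      by (apply Rmult_le_pos; apply pow_le; [apply pos_INR|lra]).
    assert (0 < (1 - x) ^ S m) by (apply pow_lt; lra).
    apply (Rmult_le_reg_l (1 - x)); auto.
    apply Rle_trans with (INR (S m) * (INR (fact m) * x / (1 - x) ^ S m)).
    + assert (0 <= INR (S m)) by apply pos_INR. nra.
    + right. rewrite fact_simpl, mult_INR. simpl. field. split; [apply pow_nonzero|]; lra.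
Qed.

Lemma weight_series m x : 0 <= x < 1 ->
  ex_series (weight m x) /\ Series (weight m x) <= INR (fact m) * x / (1 - x) ^ S m.
Proof.
  intros Hx. apply series_bounded_partial_sums.
  - intros; apply weight_ge0; lra.
  - intros; apply weight_sum_le; auto.
Qed.

Lemma ex_series_Rabs_le (a b : nat -> R) :
  (forall n, Rabs (a n) <= b n) -> ex_series b -> ex_series (fun n => Rabs (a n)).
Proof.
  intros H Hb. apply (@ex_series_le R_AbsRing R_CompleteNormedModule _ b); auto.
  intros n. change (norm ?v) with (Rabs v). rewrite Rabs_Rabsolu. auto.
Qed.

Lemma weight_dominates f M m x : 0 <= x -> (forall B, Rabs (f B) <= M) ->
  forall j, Rabs (f (S j) * weight m x j) <= M * weight m x j.
Proof.
  intros Hx HM j. rewrite Rabs_mult, (Rabs_right (weight m x j)) by (apply Rle_ge, weight_ge0; lra).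
  apply Rmult_le_compat_r; auto. apply weight_ge0; lra.
Qed.

Lemma wsum_abs_ex_series f M m x : 0 <= x < 1 -> (forall B, Rabs (f B) <= M) ->
  ex_series (fun j => Rabs (f (S j) * weight m x j)) /\ ex_series (fun j => M * weight m x j).
Proof.
  intros Hx HM. destruct (weight_series m x Hx) as [[l Hl] _].
  assert (HexM : ex_series (fun j => M * weight m x j))
    by (exists (M * l); exact (is_series_scal_l M _ l Hl)).
  split; auto. apply (ex_series_Rabs_le _ _ (weight_dominates f M m x (proj1 Hx) HM) HexM).
Qed.

Lemma wsum_correct f M m x : 0 <= x < 1 -> (forall B, Rabs (f B) <= M) ->
  is_series (fun j => f (S j) * weight m x j) (wsum f m x).
Proof.
  intros Hx HM. apply Series_correct, ex_series_Rabs. apply (wsum_abs_ex_series f M m x Hx HM).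
Qed.

Lemma wsum_le f M m x : 0 <= x < 1 -> (forall B, Rabs (f B) <= M) ->
  Rabs (wsum f m x) <= M * (INR (fact m) * x / (1 - x) ^ S m).
Proof.
  intros Hx HM. destruct (weight_series m x Hx) as [_ Hb].
  destruct (wsum_abs_ex_series f M m x Hx HM) as [Habs HexM].
  assert (Hle := weight_dominates f M m x (proj1 Hx) HM).
  unfold wsum. eapply Rle_trans; [apply Series_Rabs, Habs|].
  eapply Rle_trans; [apply (Series_le _ _ (fun j => conj (Rabs_pos _) (Hle j)) HexM)|].
  rewrite Series_scal_l. apply Rmult_le_compat_l; auto. apply (bound_nonneg f M HM).
Qed.

(* Abel summation against [F], using [(j+2)^m = sum_l C(m,l) (j+1)^l]. *)
Lemma wsum_by_parts f F M m x : 0 <= x < 1 -> (forall B, Rabs (F B) <= M) ->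
  (forall B, f (S B) = F (S B) - F B) ->
  wsum f m x =
  (1 - x) * wsum F m x - x * F O - x * psum (fun l => Binomial.C m l * wsum F l x) m.
Proof.
  intros Hx HM Hf.
  assert (HF : forall l, is_series (fun j => F (S j) * weight l x j) (wsum F l x))
    by (intros l; apply (wsum_correct F M l x Hx HM)).
  set (X := psum (fun l => Binomial.C m l * wsum F l x) (S m)).
  assert (Hbin : forall j, x * psum (fun l => Binomial.C m l * (F (S j) * weight l x j)) (S m)
                           = F (S j) * weight m x (S j)).
  { intros j. unfold weight.
    replace (INR (S (S j))) with (INR (S j) + 1) by (rewrite (S_INR (S j)); ring).
    rewrite binomial, <- psum_sum_f_R0.
    transitivity ((F (S j) * x ^ S (S j)) *
      psum (fun i => Binomial.C m i * INR (S j) ^ i * 1 ^ (m - i)) (S m)); [|ring].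
    rewrite <- !psum_scal. apply psum_ext; intros i _. rewrite pow1. simpl. ring. }
  assert (Hshift : is_series (fun j => F (S j) * weight m x (S j)) (x * X)).
  { apply (is_series_ext _ _ _ Hbin). refine (is_series_scal_l x _ _ _).
    apply (is_series_psum (fun l j => Binomial.C m l * (F (S j) * weight l x j))).
    intros l _. exact (is_series_scal_l _ _ _ (HF l)). }
  assert (Hprev : is_series (fun j => F j * weight m x j) (x * X + F O * x)).
  { apply is_series_decr_1.
    match goal with |- is_series _ ?l => replace l with (x * X); [exact Hshift|] end.
    unfold weight. rewrite pow1. change (x * X = x * X + F O * x + - (F O * (1 * x ^ 1))). ring. }
  assert (Hf' : is_series (fun j => f (S j) * weight m x j) (wsum F m x - (x * X + F O * x))).
  { assert (E : forall j, F (S j) * weight m x j - F j * weight m x j = f (S j) * weight m x j)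
      by (intros j; rewrite Hf; ring).
    exact (is_series_ext _ _ _ E (is_series_minus _ _ _ _ (HF m) Hprev)). }
  unfold wsum at 1. rewrite (is_series_unique _ _ Hf').
  unfold X. simpl psum. rewrite C_n_n. ring.
Qed.

Definition wsum_bound (c m p : nat) (E : R) : Prop :=
  forall f M x, 0 <= x < 1 -> periodic_mean_zero c f -> (forall B, Rabs (f B) <= M) ->
  (1 - x) ^ p * Rabs (wsum f m x) <= E * M * x.

Lemma wsum_bound_mono c m p E E' : E <= E' -> wsum_bound c m p E -> wsum_bound c m p E'.
Proof.
  intros HE H f M x Hx Hf HM. eapply Rle_trans; [apply (H f M x Hx Hf HM)|].
  assert (0 <= M * x) by (apply Rmult_le_pos; [apply (bound_nonneg f M HM)|lra]).
  rewrite !Rmult_assoc. apply Rmult_le_compat_r; auto.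
Qed.

Lemma wsum_bound_trivial c m : wsum_bound c m (S m) (INR (fact m)).
Proof.
  intros f M x Hx _ HM. assert (H := wsum_le f M m x Hx HM).
  assert (Hp : 0 < (1 - x) ^ S m) by (apply pow_lt; lra).
  apply (Rmult_le_compat_l ((1 - x) ^ S m)) in H; [|lra].
  eapply Rle_trans; [apply H|]. right. field. lra.
Qed.

Lemma binomial_C_ge0 m l : 0 <= Binomial.C m l.
Proof.
  unfold Binomial.C. apply Rmult_le_pos; [apply pos_INR|].
  apply Rlt_le, Rinv_0_lt_compat, Rmult_lt_0_compat; apply INR_fact_lt_0.
Qed.

Lemma by_parts_abs_le x q a b F0 M : 0 <= x <= 1 -> 0 <= q <= 1 -> Rabs F0 <= M ->
  q * Rabs ((1 - x) * a - x * F0 - x * b) <= (1 - x) * q * Rabs a + x * M + x * Rabs b.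
Proof.
  intros Hx Hq HF0.
  assert (T : Rabs ((1 - x) * a - x * F0 - x * b) <= (1 - x) * Rabs a + x * M + x * Rabs b).
  { replace ((1 - x) * a - x * F0 - x * b) with ((1 - x) * a + - (x * F0) + - (x * b)) by ring.
    eapply Rle_trans; [apply Rabs_triang|]. rewrite Rabs_Ropp.
    eapply Rle_trans; [apply Rplus_le_compat_r, Rabs_triang|]. rewrite Rabs_Ropp.
    rewrite !Rabs_mult, (Rabs_right (1 - x)), (Rabs_right x) by lra.
    assert (x * Rabs F0 <= x * M) by (apply Rmult_le_compat_l; lra). lra. }
  assert (0 <= x * M) by (apply Rmult_le_pos; pose proof (Rabs_pos F0); lra).
  assert (0 <= x * Rabs b) by (apply Rmult_le_pos; [lra|apply Rabs_pos]).
  apply Rle_trans with (q * ((1 - x) * Rabs a + x * M + x * Rabs b));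
    [apply Rmult_le_compat_l; lra|nra].
Qed.

(* One summation by parts trades a factor [1 - x] for bounds on lower moments. *)
Lemma wsum_bound_step c m p E K : (0 < c)%nat -> 0 <= K ->
  (forall l, (l < m)%nat -> wsum_bound c l 0 K) -> wsum_bound c m (S p) E ->
  wsum_bound c m p ((E + 1 + psum (Binomial.C m) m * K) * (2 * INR c)).
Proof.
  intros Hc K0 Hlow HE f M x Hx Hf HM.
  destruct (periodic_mean_zero_antiderivative c f M Hc Hf HM) as [F [HF [HFM HfF]]].
  set (M' := 2 * INR c * M) in *.
  assert (M'0 : 0 <= M') by apply (bound_nonneg F M' HFM).
  rewrite (wsum_by_parts f F M' m x Hx HFM HfF).
  set (Cs := psum (Binomial.C m) m).
  assert (CsK : 0 <= Cs * K) by (apply Rmult_le_pos; [apply psum_ge0, binomial_C_ge0|auto]).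
  set (b := psum (fun l => Binomial.C m l * wsum F l x) m).
  assert (Hb : Rabs b <= Cs * K * M' * x).
  { eapply Rle_trans; [apply psum_abs|]. unfold Cs.
    rewrite !Rmult_assoc, Rmult_comm, <- psum_scal. apply psum_le. intros l Hl.
    rewrite Rabs_mult, (Rabs_right (Binomial.C m l)) by (apply Rle_ge, binomial_C_ge0).
    rewrite Rmult_comm. apply Rmult_le_compat_r; [apply binomial_C_ge0|].
    assert (H := Hlow l Hl F M' x Hx HF HFM). simpl in H. lra. }
  assert (Ha := HE F M' x Hx HF HFM). simpl in Ha.
  assert (Hq : 0 <= (1 - x) ^ p <= 1).
  { split; [apply pow_le; lra|]. rewrite <- (pow1 p) at 2. apply pow_incr; lra. }
  eapply Rle_trans; [apply (by_parts_abs_le x _ _ _ _ M'); auto; lra|].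
  assert (x * Rabs b <= Cs * K * M' * x).
  { assert (0 <= Cs * K * M' * x) by (apply Rmult_le_pos; [apply Rmult_le_pos|]; lra).
    apply Rle_trans with (x * (Cs * K * M' * x)); [apply Rmult_le_compat_l; lra|nra]. }
  replace ((E + 1 + Cs * K) * (2 * INR c) * M * x) with (E * M' * x + M' * x + Cs * K * M' * x)
    by (unfold M'; ring).
  lra.
Qed.

Lemma wsum_bound_descend c m K : (0 < c)%nat -> 0 <= K ->
  (forall l, (l < m)%nat -> wsum_bound c l 0 K) ->
  forall p E, wsum_bound c m p E -> exists E', wsum_bound c m 0 E'.
Proof.
  intros Hc K0 Hlow p. induction p as [|p IH]; intros E HE; [exists E; auto|].
  exact (IH _ (wsum_bound_step c m p E K Hc K0 Hlow HE)).
Qed.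

(* After [m + 1] summations by parts the trivial bound [x / (1 - x)^(m+1)]
   loses its singularity at [x = 1]. *)
Lemma wsum_cancellation c m : (0 < c)%nat ->
  exists K, 0 <= K /\ forall l, (l <= m)%nat -> wsum_bound c l 0 K.
Proof.
  intros Hc. induction m as [|m [K [K0 HK]]].
  - destruct (wsum_bound_descend c 0 0 Hc (Rle_refl 0) ltac:(intros; lia) _ _
      (wsum_bound_trivial c 0)) as [E HE].
    exists (Rmax 0 E). split; [apply Rmax_l|].
    intros l Hl. replace l with 0%nat by lia. apply (wsum_bound_mono _ _ _ E); auto. apply Rmax_r.
  - destruct (wsum_bound_descend c (S m) K Hc K0 ltac:(intros; apply HK; lia) _ _
      (wsum_bound_trivial c (S m))) as [E HE].
    exists (Rmax K E). split; [apply (Rle_trans _ _ _ K0 (Rmax_l _ _))|].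
    intros l Hl. destruct (Nat.eq_dec l (S m)) as [->|Hne].
    + apply (wsum_bound_mono _ _ _ E); auto. apply Rmax_r.
    + apply (wsum_bound_mono _ _ _ K); [apply Rmax_l|]. apply HK; lia.
Qed.

Lemma char_periodic q chi : dirichlet_char q chi -> forall j n, chi (n + j * q)%Z = chi n.
Proof.
  intros [_ [_ [_ [Hp _]]]] j. induction j using Z.peano_ind; intros n.
  - f_equal; lia.
  - rewrite <- (IHj n). replace (n + Z.succ j * q)%Z with (n + j * q + q)%Z by lia. apply Hp.
  - rewrite <- (IHj n). replace (n + j * q)%Z with (n + Z.pred j * q + q)%Z by lia.
    symmetry; apply Hp.
Qed.

Lemma char_mod q chi : dirichlet_char q chi -> forall n, chi n = chi (n mod q)%Z.
Proof.
  intros Hd n. assert (q0 : (0 < q)%Z) by apply Hd.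
  rewrite <- (char_periodic q chi Hd (n / q) (n mod q)). f_equal.
  rewrite (Z_div_mod_eq_full n q) at 1. lia.
Qed.

Lemma Cmod_char_pow q chi : dirichlet_char q chi ->
  forall n (j : nat), Cmod (chi (n ^ Z.of_nat j)%Z) = Cmod (chi n) ^ j.
Proof.
  intros [_ [H1 [Hm _]]] n j. induction j.
  - simpl. rewrite H1. apply Cmod_1.
  - rewrite Nat2Z.inj_succ, Z.pow_succ_r, Hm, Cmod_mult, IHj by lia. simpl. ring.
Qed.

(* [|chi n|^j = |chi (n^j)|] stays bounded, as [chi] takes finitely many values. *)
Lemma Cmod_char_le_1 q chi : dirichlet_char q chi -> forall n, Cmod (chi n) <= 1.
Proof.
  intros Hd n. assert (q0 : (0 < q)%Z) by apply Hd.
  set (Sb := psum (fun r => Cmod (chi (Z.of_nat r))) (Z.to_nat q)).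
  assert (HB : forall m, Cmod (chi m) <= Sb).
  { intros m. rewrite (char_mod q chi Hd m).
    assert (Hr := Z.mod_pos_bound m q q0).
    replace (m mod q)%Z with (Z.of_nat (Z.to_nat (m mod q))) by lia.
    apply (psum_ge_term (fun r => Cmod (chi (Z.of_nat r)))); [intros; apply Cmod_ge_0|lia]. }
  destruct (Rle_dec (Cmod (chi n)) 1) as [H|H]; auto. exfalso.
  assert (Hgt : Rabs (Cmod (chi n)) > 1) by (rewrite Rabs_right; [lra|apply Rle_ge, Cmod_ge_0]).
  destruct (Pow_x_infinity _ Hgt (Sb + 1)) as [N HN].
  specialize (HN N (le_n N)).
  rewrite Rabs_right in HN by (apply Rle_ge, pow_le, Cmod_ge_0).
  rewrite <- (Cmod_char_pow q chi Hd) in HN. specialize (HB (n ^ Z.of_nat N)%Z). lra.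
Qed.

Lemma nontrivial_char_modulus_ne_1 q chi : dirichlet_char q chi -> nontrivial_char chi -> q <> 1%Z.
Proof.
  intros Hd [n [_ H1]] Hq. subst q. apply H1.
  assert (Hc1 : chi 1%Z = RtoC 1) by apply Hd.
  rewrite <- Hc1, <- (char_periodic 1 chi Hd (n - 1) 1). f_equal; lia.
Qed.

Lemma char_eq_0_of_dvd q chi n : dirichlet_char q chi -> nontrivial_char chi ->
  (q | n)%Z -> chi n = RtoC 0.
Proof.
  intros Hd Hnt Hn. assert (q0 : (0 < q)%Z) by apply Hd.
  apply Hd. rewrite Z.gcd_comm, (proj1 (Z.divide_gcd_iff q n ltac:(lia)) Hn).
  exact (nontrivial_char_modulus_ne_1 q chi Hd Hnt).
Qed.

Lemma cos_eq_1_2kPI y : cos y = 1 -> exists k : Z, y = 2 * IZR k * PI.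
Proof.
  intros Hy.
  assert (E : cos (2 * (y / 2)) = 1 - 2 * sin (y / 2) * sin (y / 2)) by apply cos_2a_sin.
  replace (2 * (y / 2)) with y in E by field.
  assert (Hs : sin (y / 2) = 0) by nra.
  destruct (sin_eq_0_0 _ Hs) as [k Hk]. exists k. lra.
Qed.

(* [ad - bc = 1] with [q1 | c] makes [a] a unit modulo [q1]. *)
Lemma Gamma0_dvd q1 q2 a b c d (A : Z) : (0 < q2)%Z -> in_Gamma0 (q1 * q2) a b c d ->
  (c | q2 * A * a)%Z -> (q1 | A)%Z.
Proof.
  intros Hq2 [Hdet [e He]] [k Hk]. subst c.
  assert (Hg : Z.gcd q1 a = 1%Z) by (apply Z.bezout_1_gcd; exists (- b * e * q2)%Z, d; lia).
  apply (Z.gauss _ a); auto.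
  exists (k * e)%Z. apply (Z.mul_cancel_r _ _ q2); lia.
Qed.

Lemma phase_cos_ne_1 q1 chi1 q2 a b c d (A : nat) :
  dirichlet_char q1 chi1 -> nontrivial_char chi1 -> (0 < q2)%Z ->
  in_Gamma0 (q1 * q2) a b c d -> (0 < c)%Z -> chi1 (Z.of_nat A) <> RtoC 0 ->
  cos (IZR q2 * (2 * PI * INR A * (IZR a / IZR c))) <> 1.
Proof.
  intros Hd Hnt Hq2 HG Hc Hchi Hcos. apply Hchi.
  apply (char_eq_0_of_dvd q1); auto. apply (Gamma0_dvd q1 q2 a b c d); auto.
  destruct (cos_eq_1_2kPI _ Hcos) as [k Hk]. exists k. apply eq_IZR.
  assert (IZR c <> 0) by (apply not_0_IZR; lia). pose proof PI_RGT_0.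
  rewrite !mult_IZR, <- INR_IZR_INZ.
  apply (Rmult_eq_reg_r (2 * PI / IZR c)); [|apply Rmult_integral_contrapositive; split;
    [lra|apply Rinv_neq_0_compat; auto]].
  replace (IZR q2 * INR A * IZR a * (2 * PI / IZR c))
    with (IZR q2 * (2 * PI * INR A * (IZR a / IZR c))) by (field; auto).
  rewrite Hk. field; auto.
Qed.

Definition twist (chi : Z -> C) (th : R) (B : nat) : C :=
  Cmult (Cconj (chi (Z.of_nat B))) (cos (INR B * th), sin (INR B * th)).

Lemma Cmod_cos_sin t : Cmod (cos t, sin t) = 1.
Proof.
  unfold Cmod; cbn [fst snd]. rewrite <- sqrt_1. f_equal.
  assert (H := sin2_cos2 t). unfold Rsqr in H. simpl. lra.
Qed.

Lemma twist_bound q chi th B : dirichlet_char q chi ->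
  Rabs (Re (twist chi th B)) <= 1 /\ Rabs (Im (twist chi th B)) <= 1.
Proof.
  intros Hd.
  assert (H : Cmod (twist chi th B) <= 1).
  { unfold twist. rewrite Cmod_mult, Cmod_conj, Cmod_cos_sin, Rmult_1_r.
    apply (Cmod_char_le_1 q chi Hd). }
  split; [apply (Rle_trans _ _ _ (re_le_Cmod _) H)|].
  apply (Rle_trans _ _ _ (Rle_trans _ _ _ (Rmax_r _ _) (Rmax_Cmod _)) H).
Qed.

Lemma cos_sin_add_2kPI x (k : Z) :
  cos (x + 2 * IZR k * PI) = cos x /\ sin (x + 2 * IZR k * PI) = sin x.
Proof.
  destruct (Z_le_gt_dec 0 k).
  - replace (IZR k) with (INR (Z.to_nat k)) by (rewrite INR_IZR_INZ; f_equal; lia).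
    split; [apply cos_period|apply sin_period].
  - rewrite <- (cos_period (x + 2 * IZR k * PI) (Z.to_nat (- k))),
      <- (sin_period (x + 2 * IZR k * PI) (Z.to_nat (- k))).
    rewrite INR_IZR_INZ, Z2Nat.id, opp_IZR by lia.
    replace (x + 2 * IZR k * PI + 2 * - IZR k * PI) with x by ring. auto.
Qed.

Lemma twist_periodic q chi th (c : nat) (w : Z) : dirichlet_char q chi ->
  (q | Z.of_nat c)%Z -> INR c * th = 2 * IZR w * PI ->
  forall B, twist chi th (B + c) = twist chi th B.
Proof.
  intros Hd [t Ht] Hw B. unfold twist.
  rewrite Nat2Z.inj_add, Ht, (char_periodic q chi Hd).
  rewrite plus_INR, Rmult_plus_distr_r, Hw.
  destruct (cos_sin_add_2kPI (INR B * th) w) as [-> ->]. reflexivity.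
Qed.

Lemma twist_shift q chi th B : dirichlet_char q chi ->
  twist chi th (Z.to_nat q + B) = Cmult (twist chi th B) (cos (IZR q * th), sin (IZR q * th)).
Proof.
  intros Hd. assert (q0 : (0 < q)%Z) by apply Hd.
  unfold twist. rewrite Nat2Z.inj_add, Z2Nat.id by lia.
  replace (q + Z.of_nat B)%Z with (Z.of_nat B + 1 * q)%Z by lia.
  rewrite (char_periodic q chi Hd), plus_INR, INR_IZR_INZ, Z2Nat.id by lia.
  replace ((IZR q + INR B) * th) with (INR B * th + IZR q * th) by ring.
  rewrite cos_plus, sin_plus.
  destruct (chi (Z.of_nat B)) as [cr ci]. unfold Cmult, Cconj; simpl. f_equal; ring.
Qed.

Lemma rotation_fixed_eq_0 co si W1 W2 : co * co + si * si = 1 -> co <> 1 ->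
  W1 = co * W1 - si * W2 -> W2 = si * W1 + co * W2 -> W1 = 0 /\ W2 = 0.
Proof.
  intros Hcs Hco E1 E2.
  assert (Hlt : co < 1) by nra.
  assert (Z1 : W1 * (2 - 2 * co) = 0).
  { replace (2 - 2 * co) with ((1 - co) * (1 - co) + si * si) by lra.
    transitivity ((1 - co) * ((1 - co) * W1) + si * (si * W1)); [ring|].
    replace ((1 - co) * W1) with (- si * W2) by lra.
    replace (si * W1) with ((1 - co) * W2) by lra. ring. }
  assert (W1z : W1 = 0) by (destruct (Rmult_integral _ _ Z1); lra).
  split; auto. subst W1. nra.
Qed.

(* Shifting a period window by [q] rotates its sum by the angle [q th]. *)
Lemma twist_mean_zero q chi th (c : nat) (w : Z) : dirichlet_char q chi ->
  (q | Z.of_nat c)%Z -> INR c * th = 2 * IZR w * PI -> cos (IZR q * th) <> 1 ->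
  periodic_mean_zero c (fun B => Re (twist chi th B)) /\
  periodic_mean_zero c (fun B => Im (twist chi th B)).
Proof.
  intros Hd Hqc Hw Hcos.
  assert (Hp := twist_periodic q chi th c w Hd Hqc Hw).
  set (f1 := fun B => Re (twist chi th B)). set (f2 := fun B => Im (twist chi th B)).
  assert (P1 : forall B, f1 (B + c)%nat = f1 B) by (intros; unfold f1; rewrite Hp; auto).
  assert (P2 : forall B, f2 (B + c)%nat = f2 B) by (intros; unfold f2; rewrite Hp; auto).
  set (co := cos (IZR q * th)) in *. set (si := sin (IZR q * th)).
  assert (Hcs : co * co + si * si = 1)
    by (rewrite <- (sin2_cos2 (IZR q * th)); unfold Rsqr, co, si; ring).
  assert (Hsh : forall s, f1 (Z.to_nat q + s)%nat = co * f1 s + - si * f2 s /\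
                          f2 (Z.to_nat q + s)%nat = si * f1 s + co * f2 s).
  { intros s. unfold f1, f2. rewrite (twist_shift q chi th s Hd). unfold co, si. simpl.
    split; ring. }
  destruct (rotation_fixed_eq_0 co si (psum f1 c) (psum f2 c)) as [W1 W2]; auto.
  - rewrite <- (psum_window c f1 P1 (Z.to_nat q)) at 1.
    rewrite (psum_ext _ _ c (fun s _ => proj1 (Hsh s))), psum_plus, !psum_scal. ring.
  - rewrite <- (psum_window c f2 P2 (Z.to_nat q)) at 1.
    rewrite (psum_ext _ _ c (fun s _ => proj2 (Hsh s))), psum_plus, !psum_scal. ring.
  - split; split; auto.
Qed.

Lemma is_series_C (a : nat -> C) (x y : R) :
  is_series (fun n => Re (a n)) x -> is_series (fun n => Im (a n)) y -> is_series a (x, y).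
Proof.
  assert (HRe : forall N, Re (sum_n a N) = sum_n (fun n => Re (a n)) N).
  { induction N; [rewrite !sum_O|rewrite !sum_Sn; simpl; rewrite <- IHN]; reflexivity. }
  assert (HIm : forall N, Im (sum_n a N) = sum_n (fun n => Im (a n)) N).
  { induction N; [rewrite !sum_O|rewrite !sum_Sn; simpl; rewrite <- IHN]; reflexivity. }
  unfold is_series. intros Hx Hy. apply filterlim_locally. intros eps.
  generalize (filter_and _ _ (proj1 (filterlim_locally _ _) Hx eps)
                              (proj1 (filterlim_locally _ _) Hy eps)).
  apply filter_imp. intros N [H1 H2]. split.
  - change (ball x eps (Re (sum_n a N))). rewrite HRe. exact H1.
  - change (ball y eps (Im (sum_n a N))). rewrite HIm. exact H2.
Qed.

Lemma is_series_C_dominated (a : nat -> C) (b : nat -> R) :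
  (forall n, Cmod (a n) <= b n) -> ex_series b -> exists S, is_series a S /\ Cmod S <= Series b.
Proof.
  intros Hab Hb.
  destruct (@ex_series_le C_AbsRing C_CompleteNormedModule a b Hab Hb) as [S HS].
  exists S. split; auto.
  apply (is_lim_seq_le (fun N => Cmod (sum_n a N)) (sum_n b) (Cmod S) (Series b)).
  - intros N. eapply Rle_trans; [apply (norm_sum_n_m a 0 N)|]. apply sum_n_m_le, Hab.
  - eapply filterlim_comp; [exact HS|exact (filterlim_norm (K := C_AbsRing) S)].
  - exact (Series_correct _ Hb).
Qed.

Lemma Cmod_pair_le x y : Cmod (x, y) <= Rabs x + Rabs y.
Proof.
  unfold Cmod. cbn [fst snd].
  pose proof (Rabs_pos x); pose proof (Rabs_pos y).
  rewrite <- (sqrt_pow2 (Rabs x + Rabs y)) by lra.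
  apply sqrt_le_1_alt. rewrite <- (pow2_abs x), <- (pow2_abs y). nra.
Qed.

Definition twisted_wsum (chi : Z -> C) (th : R) (m : nat) (x : R) : C :=
  (wsum (fun B => Re (twist chi th B)) m x, wsum (fun B => Im (twist chi th B)) m x).

Lemma is_series_twisted_wsum q chi th m x : dirichlet_char q chi -> 0 <= x < 1 ->
  is_series (fun j => Cmult (twist chi th (S j)) (RtoC (weight m x j))) (twisted_wsum chi th m x).
Proof.
  intros Hd Hx. apply is_series_C.
  - apply (is_series_ext (fun j => Re (twist chi th (S j)) * weight m x j)).
    + intros j. simpl. ring.
    + apply (wsum_correct (fun B => Re (twist chi th B)) 1 m x Hx).
      intros B; apply (twist_bound q chi th B Hd).
  - apply (is_series_ext (fun j => Im (twist chi th (S j)) * weight m x j)).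
    + intros j. simpl. ring.
    + apply (wsum_correct (fun B => Im (twist chi th B)) 1 m x Hx).
      intros B; apply (twist_bound q chi th B Hd).
Qed.

Lemma twisted_wsum_bound (m : nat) (c q2 : Z) : (0 < c)%Z ->
  exists K, 0 <= K /\ forall q1 chi1 chi2 a b d (A : nat) x,
    dirichlet_char q1 chi1 -> nontrivial_char chi1 -> dirichlet_char q2 chi2 ->
    in_Gamma0 (q1 * q2) a b c d -> chi1 (Z.of_nat A) <> RtoC 0 -> 0 <= x < 1 ->
    Cmod (twisted_wsum chi2 (2 * PI * INR A * (IZR a / IZR c)) m x) <= 2 * K * x.
Proof.
  intros Hc. destruct (wsum_cancellation (Z.to_nat c) m ltac:(lia)) as [K [K0 HK]].
  exists K. split; auto.
  intros q1 chi1 chi2 a b d A x Hd1 Hnt1 Hd2 HG Hchi Hx.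
  assert (Hq2 : (0 < q2)%Z) by apply Hd2.
  set (th := 2 * PI * INR A * (IZR a / IZR c)).
  assert (Hdvd : (q2 | Z.of_nat (Z.to_nat c))%Z).
  { rewrite Z2Nat.id by lia. destruct HG as [_ [e He]]. exists (e * q1)%Z. lia. }
  assert (Hw : INR (Z.to_nat c) * th = 2 * IZR (Z.of_nat A * a) * PI).
  { rewrite INR_IZR_INZ, Z2Nat.id, mult_IZR, <- INR_IZR_INZ by lia. unfold th.
    field. apply not_0_IZR; lia. }
  destruct (twist_mean_zero q2 chi2 th _ _ Hd2 Hdvd Hw
    (phase_cos_ne_1 q1 chi1 q2 a b c d A Hd1 Hnt1 Hq2 HG Hc Hchi)) as [H1 H2].
  assert (B1 := HK m (le_n m) _ 1 x Hx H1 (fun B => proj1 (twist_bound q2 chi2 th B Hd2))).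
  assert (B2 := HK m (le_n m) _ 1 x Hx H2 (fun B => proj2 (twist_bound q2 chi2 th B Hd2))).
  rewrite pow_O, Rmult_1_l, Rmult_1_r in B1, B2.
  eapply Rle_trans; [apply Cmod_pair_le|]. unfold twisted_wsum; cbn [fst snd]. lra.
Qed.

Definition inner_sum (k n : nat) (chi1 chi2 : Z -> C) (a c : Z) (u : R) (A : nat) : C :=
  Cmult (Cdiv (chi1 (Z.of_nat A)) (RtoC (INR A ^ (n + 1))))
    (twisted_wsum chi2 (2 * PI * INR A * (IZR a / IZR c)) (k - n - 2)
       (exp (- (2 * PI * INR A * u)))).

Lemma exp_mult_INR N y : exp (INR N * y) = exp y ^ N.
Proof.
  induction N; [simpl; rewrite Rmult_0_l; apply exp_0|].
  rewrite S_INR, Rmult_plus_distr_r, Rmult_1_l, exp_plus, IHN. simpl. ring.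
Qed.

Lemma term_eq k n chi1 chi2 a c u A B :
  term k n chi1 chi2 a c u A (S B) =
  Cmult (Cdiv (chi1 (Z.of_nat A)) (RtoC (INR A ^ (n + 1))))
    (Cmult (twist chi2 (2 * PI * INR A * (IZR a / IZR c)) (S B))
       (RtoC (weight (k - n - 2) (exp (- (2 * PI * INR A * u))) B))).
Proof.
  unfold term, twist, weight, Cexp. f_equal.
  replace (Re (Cmult (RtoC (2 * PI * INR A * INR (S B))) (- u, IZR a / IZR c)))
    with (INR (S B) * - (2 * PI * INR A * u)) by (simpl; ring).
  replace (Im (Cmult (RtoC (2 * PI * INR A * INR (S B))) (- u, IZR a / IZR c)))
    with (INR (S B) * (2 * PI * INR A * (IZR a / IZR c))) by (simpl; ring).
  rewrite exp_mult_INR.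
  destruct (chi2 (Z.of_nat (S B))) as [cr ci]. unfold Cmult, Cconj, RtoC; simpl. f_equal; ring.
Qed.

Lemma decay_factor_range (A : nat) u : 0 < u -> 0 <= exp (- (2 * PI * INR (S A) * u)) < 1.
Proof.
  intros Hu. split; [apply Rlt_le, exp_pos|]. rewrite <- exp_0. apply exp_increasing.
  assert (0 < INR (S A)) by apply lt_0_INR, Nat.lt_0_succ. pose proof PI_RGT_0.
  assert (0 < 2 * PI * INR (S A)) by (apply Rmult_lt_0_compat; lra).
  assert (0 < 2 * PI * INR (S A) * u) by (apply Rmult_lt_0_compat; lra).
  lra.
Qed.

Lemma is_series_inner_sum k n q2 chi1 chi2 a c u (A : nat) :
  dirichlet_char q2 chi2 -> 0 < u ->
  is_series (fun j => term k n chi1 chi2 a c u (S A) (S j)) (inner_sum k n chi1 chi2 a c u (S A)).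
Proof.
  intros Hd Hu. apply (is_series_ext _ _ _ (fun j => eq_sym (term_eq k n chi1 chi2 a c u (S A) j))).
  refine (is_series_scal_l _ _ _ (is_series_twisted_wsum q2 chi2 _ _ _ Hd _)).
  apply decay_factor_range; auto.
Qed.

Lemma decay_factor_le N u : 0 < N -> 0 < u -> exp (- (2 * PI * N * u)) <= / (sqrt N * sqrt u).
Proof.
  intros HN Hu. rewrite exp_Ropp, <- sqrt_mult_alt by lra.
  assert (Ht : 0 < N * u) by (apply Rmult_lt_0_compat; lra).
  assert (Hs : 0 < sqrt (N * u)) by (apply sqrt_lt_R0; auto).
  apply Rinv_le_contravar; auto.
  assert (sqrt (N * u) <= 1 + N * u)
    by (rewrite <- (sqrt_pow2 (1 + N * u)) by lra; apply sqrt_le_1_alt; nra).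
  assert (1 + 2 * PI * (N * u) <= exp (2 * PI * N * u))
    by (replace (2 * PI * N * u) with (2 * PI * (N * u)) by ring; apply exp_ineq1_le).
  assert (PI >= 1) by (pose proof PI2_3_2; lra).
  nra.
Qed.

Lemma Cmod_char_div_pow_le q chi m N n : dirichlet_char q chi -> 1 <= N ->
  Cmod (chi m) / N ^ (n + 1) <= / N.
Proof.
  intros Hd HN.
  assert (Hpow : N <= N ^ (n + 1)).
  { rewrite Nat.add_1_r, <- tech_pow_Rmult. assert (1 <= N ^ n) by (apply pow_R1_Rle; lra). nra. }
  unfold Rdiv. apply Rle_trans with (1 * / N ^ (n + 1)).
  - apply Rmult_le_compat_r; [apply Rlt_le, Rinv_0_lt_compat; lra|].
    apply (Cmod_char_le_1 q chi Hd).
  - rewrite Rmult_1_l. apply Rinv_le_contravar; lra.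
Qed.

Definition inv_pow32 (A : nat) : R := / (INR (S A) * sqrt (INR (S A))).

Lemma inv_pow32_pos A : 0 < inv_pow32 A.
Proof.
  unfold inv_pow32. apply Rinv_0_lt_compat, Rmult_lt_0_compat;
    [|apply sqrt_lt_R0]; apply lt_0_INR; lia.
Qed.

(* Comparison with the telescoping sum of [2 / sqrt N - 2 / sqrt (N + 1)]. *)
Lemma inv_pow32_sum_le N : sum_n inv_pow32 N <= 3 - 2 / sqrt (INR (S N)).
Proof.
  induction N.
  - rewrite sum_O. unfold inv_pow32. simpl. rewrite sqrt_1. lra.
  - rewrite sum_Sn. change plus with Rplus.
    set (s := sqrt (INR (S N))) in *. set (t := sqrt (INR (S (S N)))).
    assert (s0 : 0 < s) by (apply sqrt_lt_R0, lt_0_INR; lia).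
    assert (t0 : 0 < t) by (apply sqrt_lt_R0, lt_0_INR; lia).
    assert (Es : s * s = INR (S N)) by (apply sqrt_sqrt, pos_INR).
    assert (Et : t * t = INR (S (S N))) by (apply sqrt_sqrt, pos_INR).
    assert (Est : t * t = s * s + 1) by (rewrite Es, Et, (S_INR (S N)); ring).
    assert (st : s < t) by nra.
    replace (inv_pow32 (S N)) with (/ (t * t * t))
      by (unfold inv_pow32; fold t; rewrite <- Et; f_equal; ring).
    assert (/ (t * t * t) <= 2 / s - 2 / t).
    { assert (0 <= (t - s) * (t - s) * (2 * t + s)) by (apply Rmult_le_pos; nra).
      apply (Rmult_le_reg_r (s * (t * t * t))); [nra|].
      replace (/ (t * t * t) * (s * (t * t * t))) with s by (field; lra).
      replace ((2 / s - 2 / t) * (s * (t * t * t))) with (2 * (t * t) * (t - s)) by (field; lra).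
      nra. }
    lra.
Qed.

Lemma inv_pow32_series : ex_series inv_pow32 /\ Series inv_pow32 <= 3.
Proof.
  apply series_bounded_partial_sums; [intros; apply Rlt_le, inv_pow32_pos|].
  intros N. assert (H := inv_pow32_sum_le N).
  assert (0 < 2 / sqrt (INR (S N)))
    by (apply Rdiv_lt_0_compat; [lra|apply sqrt_lt_R0, lt_0_INR; lia]).
  lra.
Qed.

Lemma inner_sum_bound (k n : nat) (c q2 : Z) : (0 < c)%Z ->
  exists K, 0 <= K /\ forall q1 chi1 chi2 a b d u (A : nat),
    dirichlet_char q1 chi1 -> nontrivial_char chi1 -> dirichlet_char q2 chi2 ->
    in_Gamma0 (q1 * q2) a b c d -> 0 < u ->
    Cmod (inner_sum k n chi1 chi2 a c u (S A)) <= K / sqrt u * inv_pow32 A.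
Proof.
  intros Hc. destruct (twisted_wsum_bound (k - n - 2) c q2 Hc) as [K [K0 HK]].
  exists (2 * K). split; [lra|].
  intros q1 chi1 chi2 a b d u A Hd1 Hnt1 Hd2 HG Hu.
  assert (su : 0 < sqrt u) by (apply sqrt_lt_R0; auto).
  set (N := INR (S A)).
  assert (N1 : 1 <= N) by (unfold N; rewrite S_INR; pose proof (pos_INR A); lra).
  assert (sN : 0 < sqrt N) by (apply sqrt_lt_R0; lra).
  set (x := exp (- (2 * PI * N * u))).
  assert (Hx : x <= / (sqrt N * sqrt u)) by (apply decay_factor_le; lra).
  assert (0 <= K / sqrt u * inv_pow32 A)
    by (apply Rmult_le_pos; [apply Rmult_le_pos; [lra|apply Rlt_le, Rinv_0_lt_compat; lra]|
                            apply Rlt_le, inv_pow32_pos]).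
  unfold inner_sum. fold N x.
  assert (HNn : 0 < N ^ (n + 1)) by (apply pow_lt; lra).
  rewrite Cmod_mult, Cmod_div, Cmod_R, Rabs_right by (try (intros E; apply RtoC_inj in E); lra).
  destruct (Req_dec (Cmod (chi1 (Z.of_nat (S A)))) 0) as [Hz|Hnz].
  { rewrite Hz. unfold Rdiv. rewrite !Rmult_0_l. lra. }
  assert (Hchi : chi1 (Z.of_nat (S A)) <> RtoC 0) by (intros E; apply Hnz; rewrite E; apply Cmod_0).
  assert (HT := HK q1 chi1 chi2 a b d (S A) x Hd1 Hnt1 Hd2 HG Hchi (decay_factor_range A u Hu)).
  assert (Hch := Cmod_char_div_pow_le q1 chi1 (Z.of_nat (S A)) N n Hd1 N1).
  apply Rle_trans with (/ N * (2 * K * / (sqrt N * sqrt u))).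
  - apply Rmult_le_compat; auto.
    + apply Rdiv_le_0_compat; [apply Cmod_ge_0|lra].
    + apply Cmod_ge_0.
    + apply (Rle_trans _ _ _ HT). apply Rmult_le_compat_l; lra.
  - right. unfold inv_pow32. fold N. field. repeat split; lra.
Qed.

Theorem lemma2p8 :
  forall (k n : nat), (3 <= k)%nat -> (n < k - 2)%nat ->
  forall (c q2 : Z),
  exists K : R, 0 < K /\
  forall (q1 : Z) (chi1 chi2 : Z -> C) (a b d : Z),
    primitive_char q1 chi1 -> nontrivial_char chi1 ->
    primitive_char q2 chi2 -> nontrivial_char chi2 ->
    in_Gamma0 (q1 * q2) a b c d -> (0 < c)%Z ->
    forall u : R, 0 < u ->
    exists (inner : nat -> C) (Stot : C),
      (forall A : nat, is_series (fun m => term k n chi1 chi2 a c u (Nat.succ A) (Nat.succ m)) (inner A)) /\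
      is_series inner Stot /\
      Cmod Stot <= K / sqrt u.
Proof.
  intros k n _ _ c q2.
  destruct (Z_lt_le_dec 0 c) as [Hc|Hc]; [|exists 1; split; [lra|]; intros; exfalso; lia].
  destruct (inner_sum_bound k n c q2 Hc) as [K [K0 HK]].
  exists (3 * K + 1). split; [lra|].
  intros q1 chi1 chi2 a b d [Hd1 _] Hnt1 [Hd2 _] _ HG _ u Hu.
  assert (su : 0 < / sqrt u) by (apply Rinv_0_lt_compat, sqrt_lt_R0; auto).
  destruct inv_pow32_series as [[l Hl] Hl3].
  destruct (is_series_C_dominated (fun A => inner_sum k n chi1 chi2 a c u (S A))
              (fun A => K / sqrt u * inv_pow32 A)) as [Stot [HS HSb]].
  - intros A. exact (HK q1 chi1 chi2 a b d u A Hd1 Hnt1 Hd2 HG Hu).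
  - exists (K / sqrt u * l). exact (is_series_scal_l _ _ _ Hl).
  - exists (fun A => inner_sum k n chi1 chi2 a c u (S A)), Stot.
    split; [intros A; exact (is_series_inner_sum k n q2 chi1 chi2 a c u A Hd2 Hu)|split; auto].
    eapply Rle_trans; [apply HSb|]. rewrite Series_scal_l.
    rewrite (is_series_unique _ _ Hl) in Hl3 |- *. unfold Rdiv.
    assert (0 <= K * / sqrt u) by (apply Rmult_le_pos; lra). nra.
Qed.
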